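(* Let $X$ be a Stone space and $G$ a non-archimedean topological group which is a topological subgroup of $\mathrm{Homeo}(X)$. Then the topological group $$M(\psi)=H_X\rtimes_\pi G=((\mathbb{Z}_2\oplus V)\rtimes V^* )\rtimes_\pi G,$$ where $\pi(g,(a,A,f))=(a,g(A),gf)$ with $(gf)(B)=f(g^{-1}(B))$, is a non-archimedean minimal group.
   Context: A Stone space is a compact zero-dimensional Hausdorff space; $\mathrm{Homeo}(X)$ has the compact-open topology. $V=C(X,\mathbb{Z}_2)$ is the discrete group of clopen subsets of $X$ under symmetric difference; $V^*=\mathrm{Hom}(V,\mathbb{Z}_2)$ has the pointwise topology (compact). $H_X$ is $\mathbb{Z}_2\times V\times V^*$ with product topology and multiplication $(a_1,x_1,f_1)(a_2,x_2,f_2)=(a_1+a_2+f_1(x_2),x_1+x_2,f_1+f_2)$. For a group $H$ on which $G$ acts by automorphisms, $H\rtimes G$ is $H\times G$ with product topology and multiplication $(h_1,g_1)(h_2,g_2)=(h_1\cdot g_1h_2,g_1g_2)$. A Hausdorff topological group is minimal if it admits no strictly coarser Hausdorff group topology; it is non-archimedean if it has a local base at the identity of open subgroups. *)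

From Stdlib Require Import Bool List FunctionalExtensionality ProofIrrelevance
  PropExtensionality Classical.
Set Implicit Arguments.

Definition set (T : Type) := T -> Prop.

Definition is_topology (T : Type) (O : set (set T)) : Prop :=
  O (fun _ => True) /\
  (forall A B, O A -> O B -> O (fun x => A x /\ B x)) /\
  (forall F : set (set T), (forall A, F A -> O A) ->
     O (fun x => exists A, F A /\ A x)).

Record topology (T : Type) := Topology {
  open :> set (set T);
  open_is_topology : is_topology open }.

Definition discrete_top (T : Type) : set (set T) := fun _ => True.

Definition continuous (T1 T2 : Type) (O1 : set (set T1)) (O2 : set (set T2))
  (f : T1 -> T2) : Prop :=
  forall U, O2 U -> O1 (fun x => U (f x)).

Definition prod_top (T1 T2 : Type) (O1 : set (set T1)) (O2 : set (set T2))
  : set (set (T1 * T2)) :=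
  fun W => forall p, W p -> exists A B, O1 A /\ O2 B /\ A (fst p) /\ B (snd p) /\
     (forall q, A (fst q) -> B (snd q) -> W q).

Definition gen_top (T : Type) (S : set (set T)) : set (set T) :=
  fun W => forall x, W x -> exists l : list (set T),
     (forall B, In B l -> S B) /\ (forall B, In B l -> B x) /\
     (forall y, (forall B, In B l -> B y) -> W y).

Definition sub_top (T : Type) (P : T -> Prop) (O : set (set T))
  : set (set {x : T | P x}) :=
  fun W => exists W', O W' /\ forall y, W y <-> W' (proj1_sig y).

Definition hausdorff (T : Type) (O : set (set T)) : Prop :=
  forall x y, x <> y -> exists U V, O U /\ O V /\ U x /\ V y /\
    (forall z, U z -> V z -> False).

Definition compact_set (T : Type) (O : set (set T)) (K : set T) : Prop :=
  forall F : set (set T), (forall A, F A -> O A) ->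
    (forall x, K x -> exists A, F A /\ A x) ->
    exists l : list (set T), (forall A, In A l -> F A) /\
      (forall x, K x -> exists A, In A l /\ A x).

Definition clopen (T : Type) (O : set (set T)) (C : set T) : Prop :=
  O C /\ O (fun x => ~ C x).

Definition zero_dimensional (T : Type) (O : set (set T)) : Prop :=
  forall U x, O U -> U x -> exists C, clopen O C /\ C x /\ (forall y, C y -> U y).

Definition stone_space (T : Type) (O : set (set T)) : Prop :=
  compact_set O (fun _ => True) /\ hausdorff O /\ zero_dimensional O.

Definition is_topological_group (T : Type) (mul : T -> T -> T) (inv : T -> T)
  (O : set (set T)) : Prop :=
  is_topology O /\
  continuous (prod_top O O) O (fun p => mul (fst p) (snd p)) /\
  continuous O O inv.

Definition is_subgroup (T : Type) (mul : T -> T -> T) (inv : T -> T) (e : T)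
  (W : set T) : Prop :=
  W e /\ (forall x y, W x -> W y -> W (mul x y)) /\ (forall x, W x -> W (inv x)).

Definition non_archimedean (T : Type) (mul : T -> T -> T) (inv : T -> T) (e : T)
  (O : set (set T)) : Prop :=
  forall U, O U -> U e -> exists W, O W /\ is_subgroup mul inv e W /\
    (forall x, W x -> U x).

Definition minimal_group (T : Type) (mul : T -> T -> T) (inv : T -> T)
  (O : set (set T)) : Prop :=
  is_topological_group mul inv O /\ hausdorff O /\
  forall O' : set (set T), is_topology O' -> (forall U, O' U -> O U) ->
    is_topological_group mul inv O' -> hausdorff O' ->
    forall U, O U -> O' U.

Lemma open_ext (T : Type) (O : set (set T)) (A B : set T) :
  (forall x, A x <-> B x) -> O A -> O B.
Proof.
  intros H HA. replace B with A; [exact HA|].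
  apply functional_extensionality; intro x; apply propositional_extensionality; apply H.
Qed.

Section Stone.
Variables (X : Type) (tX : topology X).

Record homeo := Homeo {
  hf : X -> X;
  hg : X -> X;
  hfg : forall x, hf (hg x) = x;
  hgf : forall x, hg (hf x) = x;
  hf_cont : continuous tX tX hf;
  hg_cont : continuous tX tX hg }.

Lemma continuous_comp (f g : X -> X) :
  continuous tX tX f -> continuous tX tX g -> continuous tX tX (fun x => f (g x)).
Proof. intros Hf Hg U HU. exact (Hg _ (Hf U HU)). Qed.

Lemma continuous_id : continuous tX tX (fun x => x).
Proof. intros U HU; exact HU. Qed.

Definition hcomp (a b : homeo) : homeo.
Proof.
  refine (@Homeo (fun x => hf a (hf b x)) (fun x => hg b (hg a x)) _ _ _ _).
  - intro x; rewrite hfg, hfg; reflexivity.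
  - intro x; rewrite hgf, hgf; reflexivity.
  - apply continuous_comp; [apply hf_cont | apply hf_cont].
  - apply continuous_comp; [apply hg_cont | apply hg_cont].
Defined.

Definition hinv (a : homeo) : homeo :=
  @Homeo (hg a) (hf a) (hgf a) (hfg a) (hg_cont a) (hf_cont a).

Definition hid : homeo :=
  @Homeo (fun x => x) (fun x => x) (fun x => eq_refl) (fun x => eq_refl)
    continuous_id continuous_id.

Definition compact_open_top : set (set homeo) :=
  gen_top (fun S => exists K U, compact_set tX K /\ open tX U /\
     forall h, S h <-> (forall x, K x -> U (hf h x))).

Record hsubgroup := HSubgroup {
  inG : homeo -> Prop;
  inG_id : inG hid;
  inG_comp : forall a b, inG a -> inG b -> inG (hcomp a b);
  inG_inv : forall a, inG a -> inG (hinv a) }.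

Section G.
Variable G : hsubgroup.
Definition Gt := {h : homeo | inG G h}.
Definition Gmul (a b : Gt) : Gt :=
  exist _ (hcomp (proj1_sig a) (proj1_sig b))
    (@inG_comp G _ _ (proj2_sig a) (proj2_sig b)).
Definition Ginv (a : Gt) : Gt := exist _ (hinv (proj1_sig a)) (@inG_inv G _ (proj2_sig a)).
Definition Gone : Gt := exist _ hid (inG_id G).
Definition G_top : set (set Gt) := sub_top (inG G) compact_open_top.
End G.

(** * V = C(X, Z2) (clopen sets, via indicator functions), under symmetric difference *)
Definition V := {A : X -> bool | continuous tX (@discrete_top bool) A}.

Lemma V_eq (A B : V) : (forall x, proj1_sig A x = proj1_sig B x) -> A = B.
Proof.
  destruct A as [a Ha], B as [b Hb]; simpl; intro H.
  assert (a = b) by (apply functional_extensionality; exact H). subst b.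
  f_equal; apply proof_irrelevance.
Qed.

Lemma xor_cont (a b : X -> bool) :
  continuous tX (@discrete_top bool) a -> continuous tX (@discrete_top bool) b ->
  continuous tX (@discrete_top bool) (fun x => xorb (a x) (b x)).
Proof.
  intros Ha Hb U _.
  destruct (open_is_topology tX) as [_ [Hi Hu]].
  apply open_ext with (A := fun x => exists S,
     (exists u v, U (xorb u v) /\ S = (fun y => a y = u /\ b y = v)) /\ S x).
  - intro x; split.
    + intros [S [[u [v [HU ->]]] [Hx Hy]]]; rewrite Hx, Hy; exact HU.
    + intro HU. exists (fun y => a y = a x /\ b y = b x); split; [|split; reflexivity].
      exists (a x), (b x); split; [exact HU | reflexivity].
  - apply Hu. intros S [u [v [_ ->]]]. apply Hi.
    + apply (Ha (fun w => w = u)); exact I.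
    + apply (Hb (fun w => w = v)); exact I.
Qed.

Definition vadd (A B : V) : V :=
  exist _ (fun x => xorb (proj1_sig A x) (proj1_sig B x))
    (xor_cont (proj2_sig A) (proj2_sig B)).

Lemma const_cont (c : bool) : continuous tX (@discrete_top bool) (fun _ : X => c).
Proof.
  intros U _. destruct (open_is_topology tX) as [HT [_ Hu]].
  destruct (classic (U c)) as [H|H].
  - apply open_ext with (A := fun _ => True); [intro; split; auto | exact HT].
  - apply open_ext with (A := fun x => exists S : set X, False /\ S x).
    + intro x; split; [intros [S [[] _]] | intro Hc; contradiction].
    + apply Hu; intros A [].
Qed.

Definition vzero : V := exist _ (fun _ => false) (const_cont false).

(* action of a homeomorphism on V: g(A) = image of A = A o g^{-1} *)
Definition vact (g : homeo) (A : V) : V :=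
  exist (fun a => continuous tX (@discrete_top bool) a) (fun x => proj1_sig A (hg g x))
    (fun U HU => hg_cont g _ (proj2_sig A U HU)).

Definition Vs := {f : V -> bool | forall A B, f (vadd A B) = xorb (f A) (f B)}.

Lemma Vs_eq (f h : Vs) : (forall A, proj1_sig f A = proj1_sig h A) -> f = h.
Proof.
  destruct f as [f Hf], h as [h Hh]; simpl; intro H.
  assert (f = h) by (apply functional_extensionality; exact H). subst h.
  f_equal; apply proof_irrelevance.
Qed.

Definition vsadd (f h : Vs) : Vs.
Proof.
  refine (exist _ (fun A => xorb (proj1_sig f A) (proj1_sig h A)) _).
  intros A B. rewrite (proj2_sig f), (proj2_sig h).
  destruct (proj1_sig f A), (proj1_sig f B), (proj1_sig h A), (proj1_sig h B);
    reflexivity.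
Defined.

Definition vszero : Vs :=
  exist (fun f : V -> bool => forall A B, f (vadd A B) = xorb (f A) (f B))
    (fun _ => false) (fun _ _ => eq_refl).

Lemma vact_add (g : homeo) (A B : V) : vact g (vadd A B) = vadd (vact g A) (vact g B).
Proof. apply V_eq; intro x; reflexivity. Qed.

Definition vsact (g : homeo) (f : Vs) : Vs.
Proof.
  refine (exist _ (fun B => proj1_sig f (vact (hinv g) B)) _).
  intros A B. rewrite vact_add. apply (proj2_sig f).
Defined.

(* pointwise topology on V* (initial topology of the evaluations into discrete Z2) *)
Definition Vs_top : set (set Vs) :=
  gen_top (fun S => exists (A : V) (b : bool), forall f, S f <-> proj1_sig f A = b).

Definition HX := (bool * V * Vs)%type.

Definition HXmul (p q : HX) : HX :=
  match p, q with
  | (a1, x1, f1), (a2, x2, f2) =>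
      (xorb (xorb a1 a2) (proj1_sig f1 x2), vadd x1 x2, vsadd f1 f2)
  end.

Definition HXinv (p : HX) : HX :=
  match p with (a, x, f) => (xorb a (proj1_sig f x), x, f) end.

Definition HXone : HX := (false, vzero, vszero).

Definition pi_act (g : homeo) (p : HX) : HX :=
  match p with (a, x, f) => (a, vact g x, vsact g f) end.

Definition HX_top : set (set HX) :=
  prod_top (prod_top (@discrete_top bool) (@discrete_top V)) Vs_top.

Section M.
Variable G : hsubgroup.
Definition Mt := (HX * Gt G)%type.

Definition Mmul (p q : Mt) : Mt :=
  (HXmul (fst p) (pi_act (proj1_sig (snd p)) (fst q)), Gmul (snd p) (snd q)).

Definition Minv (p : Mt) : Mt :=
  (pi_act (hinv (proj1_sig (snd p))) (HXinv (fst p)), Ginv (snd p)).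

Definition Mone : Mt := (HXone, @Gone G).

Definition M_top : set (set Mt) := prod_top HX_top (@G_top G).
End M.

End Stone.

(* Non-archimedean: as X is a Stone space, every neighbourhood of 1 in G contains the
   pointwise stabiliser of finitely many clopen sets, so every neighbourhood of 1 in M
   contains a subgroup {(0, 0, f, g) : f vanishes on a finite L, g in an open subgroup
   of G fixing each member of L}.

   Minimality: let S be a coarser Hausdorff group topology on M.  Since V* is compact
   and S is Hausdorff, some S-neighbourhood of 1 misses the coset (1, 0, V*, 1).
   Commutators with the elements (0, 0, h, 1) of V*, controlled uniformly in h again by
   compactness, show that S-small elements have V coordinate 0; conjugating the
   elements (0, C, 0, 1) shows that their G coordinate stabilises any given clopen C,
   hence lies in any given neighbourhood of 1 in G; multiplying by (0, 0, 0, g^-1)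
   kills their Z2 coordinate, and a last conjugation by (0, B, 0, 1) gives f(B) = 0.
   Hence every basic neighbourhood of 1 in M is an S-neighbourhood of 1. *)

From Stdlib Require Import Bool List FunctionalExtensionality ProofIrrelevance
  PropExtensionality Classical ClassicalEpsilon Btauto.

Set Implicit Arguments.

Section Lists.
Variables (A B : Type).

Lemma list_select {P R : A -> Prop} {l : list A} : (forall a, In a l -> P a \/ R a) ->
  exists l', (forall a, In a l' -> P a) /\ forall a, In a l -> In a l' \/ R a.
Proof.
  induction l as [|a l IH]; intro H.
  - exists nil; split; intros a [].
  - destruct IH as [l' [H1 H2]]. { intros b Hb; apply H; right; auto. }
    destruct (H a (or_introl eq_refl)) as [Pa|Ra].
    + exists (a :: l'); split; [intros b [<-|Hb]; auto|].
      intros b [<-|Hb]; [left; left; auto|destruct (H2 b Hb); [left; right|right]; auto].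
    + exists l'; split; auto. intros b [<-|Hb]; auto.
Qed.

Lemma list_choice {R : A -> B -> Prop} {l : list A} : (forall a, In a l -> exists b, R a b) ->
  exists l' : list B, (forall a, In a l -> exists b, In b l' /\ R a b) /\
    (forall b, In b l' -> exists a, In a l /\ R a b).
Proof.
  induction l as [|a l IH]; intro H.
  - exists nil; split; intros ? [].
  - destruct IH as [l' [H1 H2]]. { intros a' Ha'; apply H; right; auto. }
    destruct (H a (or_introl eq_refl)) as [b Rab].
    exists (b :: l'); split.
    + intros a' [<-|Ha']; [exists b; split; [left|]; auto|].
      destruct (H1 a' Ha') as [b' [? ?]]; exists b'; split; [right|]; auto.
    + intros b' [<-|Hb']; [exists a; split; [left|]; auto|].
      destruct (H2 b' Hb') as [a' [? ?]]; exists a'; split; [right|]; auto.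
Qed.

End Lists.

Section Topology.
Variables (T : Type) (O : set (set T)).
Hypothesis HO : is_topology O.

Lemma open_full : O (fun _ => True).
Proof. apply HO. Qed.

Lemma open_inter A B : O A -> O B -> O (fun x => A x /\ B x).
Proof. apply HO. Qed.

Lemma open_union F : (forall A, F A -> O A) -> O (fun x => exists A, F A /\ A x).
Proof. apply HO. Qed.

Lemma open_of_nbhds (U : set T) :
  (forall x, U x -> exists A, O A /\ A x /\ forall y, A y -> U y) -> O U.
Proof.
  intros H.
  apply open_ext with (A := fun x => exists A, (O A /\ forall y, A y -> U y) /\ A x).
  - intro x; split.
    + intros [A [[_ HA] Ax]]; auto.
    + intro Ux; destruct (H x Ux) as [A [OA [Ax HA]]]; exists A; auto.
  - apply open_union. intros A [OA _]; auto.
Qed.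

Lemma nbhd_list_inter (e : T) (Idx : Type) (Q : Idx -> set T -> Prop) (l : list Idx) :
  (forall i A B, (forall x, B x -> A x) -> Q i A -> Q i B) ->
  (forall i, In i l -> exists A, O A /\ A e /\ Q i A) ->
  exists W, O W /\ W e /\ forall i, In i l -> Q i W.
Proof.
  intros Hm; induction l as [|i l IH]; intro H.
  - exists (fun _ => True); split; [apply open_full|split; [exact I|intros i []]].
  - destruct IH as [W [OW [We HW]]]. { intros j Hj; apply H; right; auto. }
    destruct (H i (or_introl eq_refl)) as [A [OA [Ae HA]]].
    exists (fun x => A x /\ W x); split; [apply open_inter; auto|split; [auto|]].
    intros j [<-|Hj]; [apply Hm with A|apply Hm with W]; auto; tauto.
Qed.

Lemma open_list_inter (Idx : Type) (P : Idx -> set T) (l : list Idx) :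
  (forall i, O (P i)) -> O (fun x => forall i, In i l -> P i x).
Proof.
  intro H. induction l as [|i l IH].
  - apply open_ext with (A := fun _ => True); [|apply open_full].
    intro; split; auto. intros _ i [].
  - apply open_ext with (A := fun x => P i x /\ forall j, In j l -> P j x).
    + intro x; split; [intros [H1 H2] j [<-|Hj]; auto|].
      intro Hx; split; [apply Hx; left|intros; apply Hx; right]; auto.
    + apply open_inter; auto.
Qed.

End Topology.

Lemma discrete_is_topology T : is_topology (@discrete_top T).
Proof. unfold discrete_top; repeat split; auto. Qed.

Lemma prod_top_is_topology T1 T2 (O1 : set (set T1)) (O2 : set (set T2)) :
  is_topology O1 -> is_topology O2 -> is_topology (prod_top O1 O2).
Proof.
  intros H1 H2; split; [|split].
  - intros p _. exists (fun _ => True), (fun _ => True).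
    repeat split; apply open_full; auto.
  - intros A B HA HB p [Ap Bp].
    destruct (HA p Ap) as [A1 [B1 [OA1 [OB1 [A1p [B1p K1]]]]]].
    destruct (HB p Bp) as [A2 [B2 [OA2 [OB2 [A2p [B2p K2]]]]]].
    exists (fun x => A1 x /\ A2 x), (fun x => B1 x /\ B2 x).
    split; [apply open_inter; auto|]. split; [apply open_inter; auto|].
    split; [split; auto|]. split; [split; auto|]. intros r [] []; split; auto.
  - intros F HF p [A [FA Ap]].
    destruct (HF A FA p Ap) as [A1 [B1 [OA1 [OB1 [A1p [B1p K1]]]]]].
    exists A1, B1; repeat split; auto. intros q a b; exists A; auto.
Qed.

Lemma gen_top_is_topology T (S : set (set T)) : is_topology (gen_top S).
Proof.
  split; [|split].
  - intros x _; exists nil; simpl; repeat split; tauto.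
  - intros A B HA HB x [Ax Bx].
    destruct (HA x Ax) as [l1 [S1 [X1 Y1]]]; destruct (HB x Bx) as [l2 [S2 [X2 Y2]]].
    exists (l1 ++ l2); split; [|split].
    + intros C HC; apply in_app_or in HC; destruct HC; auto.
    + intros C HC; apply in_app_or in HC; destruct HC; [apply X1|apply X2]; auto.
    + intros y H; split; [apply Y1|apply Y2]; intros C HC; apply H, in_or_app; auto.
  - intros F HF x [A [FA Ax]].
    destruct (HF A FA x Ax) as [l [S1 [X1 Y1]]].
    exists l; repeat split; auto. intros y Hy; exists A; auto.
Qed.

Lemma sub_top_is_topology T (P : T -> Prop) (O : set (set T)) :
  is_topology O -> is_topology (sub_top P O).
Proof.
  intros HO; split; [|split].
  - exists (fun _ => True); split; [apply open_full; auto|tauto].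
  - intros A B [A' [HA' EA]] [B' [HB' EB]].
    exists (fun x => A' x /\ B' x); split; [apply open_inter; auto|].
    intro y; rewrite EA, EB; tauto.
  - intros F HF.
    exists (fun x => exists A', O A' /\ (exists A, F A /\ forall y, A y <-> A' (proj1_sig y)) /\ A' x).
    split.
    + apply open_ext with (A := fun x => exists A', (O A' /\ exists A, F A /\
          forall y, A y <-> A' (proj1_sig y)) /\ A' x); [intro; firstorder|].
      apply open_union; auto. intros A' [? _]; auto.
    + intro y; split.
      * intros [A [FA Ay]]. destruct (HF A FA) as [A' [OA' EA]].
        exists A'; split; [auto|split; [exists A; auto|apply EA; auto]].
      * intros [A' [_ [[A [FA EA]] Ay]]]. exists A; split; auto. apply EA; auto.
Qed.

Section TopologicalGroup.
Variables (T : Type) (mul : T -> T -> T) (inv : T -> T) (O : set (set T)).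
Hypothesis HT : is_topological_group mul inv O.

Lemma tg_is_topology : is_topology O.
Proof. apply HT. Qed.

Lemma mul_cont_at W p q : O W -> W (mul p q) ->
  exists A B, O A /\ O B /\ A p /\ B q /\ forall p' q', A p' -> B q' -> W (mul p' q').
Proof.
  intros OW Wpq. destruct HT as [_ [Hm _]].
  destruct (Hm W OW (p, q) Wpq) as [A [B [OA [OB [Ap [Bq H]]]]]].
  exists A, B; repeat split; auto. intros p' q' a b; exact (H (p', q') a b).
Qed.

Lemma inv_cont_at W p : O W -> W (inv p) ->
  exists A, O A /\ A p /\ forall p', A p' -> W (inv p').
Proof. intros OW Wp. exists (fun x => W (inv x)); repeat split; auto; apply HT, OW. Qed.

Lemma open_ltranslate W c : O W -> O (fun y => W (mul c y)).
Proof.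
  intro OW. apply open_of_nbhds; [apply tg_is_topology|]. intros y Wy.
  destruct (mul_cont_at _ _ OW Wy) as [A [B [OA [OB [Ac [By H]]]]]].
  exists B; repeat split; auto.
Qed.

Lemma commutator_cont_at W p q : O W -> W (mul (mul p q) (mul (inv p) (inv q))) ->
  exists A B, O A /\ O B /\ A p /\ B q /\
  forall p' q', A p' -> B q' -> W (mul (mul p' q') (mul (inv p') (inv q'))).
Proof.
  intros OW Wc. pose proof tg_is_topology as Ht.
  destruct (mul_cont_at _ _ OW Wc) as [A1 [A2 [O1 [O2 [H1 [H2 H12]]]]]].
  destruct (mul_cont_at _ _ O1 H1) as [A3 [A4 [O3 [O4 [H3 [H4 H34]]]]]].
  destruct (mul_cont_at _ _ O2 H2) as [A5 [A6 [O5 [O6 [H5 [H6 H56]]]]]].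
  destruct (inv_cont_at _ O5 H5) as [A7 [O7 [H7 H7']]].
  destruct (inv_cont_at _ O6 H6) as [A8 [O8 [H8 H8']]].
  exists (fun x => A3 x /\ A7 x), (fun x => A4 x /\ A8 x).
  repeat split; try apply open_inter; auto.
  intros p' q' [] []; auto.
Qed.

Lemma conj_cont_at W v p : O W -> W (mul (mul p v) (inv p)) ->
  exists A, O A /\ A p /\ forall p', A p' -> W (mul (mul p' v) (inv p')).
Proof.
  intros OW Wc. pose proof tg_is_topology as Ht.
  destruct (mul_cont_at _ _ OW Wc) as [A1 [A2 [O1 [O2 [H1 [H2 H12]]]]]].
  destruct (mul_cont_at _ _ O1 H1) as [A3 [A4 [O3 [O4 [H3 [H4 H34]]]]]].
  destruct (inv_cont_at _ O2 H2) as [A7 [O7 [H7 H7']]].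
  exists (fun x => A3 x /\ A7 x); repeat split; try apply open_inter; auto.
  intros p' []; auto.
Qed.

End TopologicalGroup.

(** * Zorn's lemma and the compactness of V* *)

Section Zorn.
Variable A : Type.

Definition subset (P Q : set A) := forall a, P a -> Q a.
Definition chain (S : set (set A)) := forall P Q, S P -> S Q -> subset P Q \/ subset Q P.
Definition bigcup (S : set (set A)) : set A := fun a => exists P, S P /\ P a.

Lemma subset_antisym (P Q : set A) : subset P Q -> subset Q P -> P = Q.
Proof.
  intros H1 H2; apply functional_extensionality; intro a;
  apply propositional_extensionality; split; auto.
Qed.

Lemma chain_list_bound (S : set (set A)) (l : list A) : chain S ->
  (forall a, In a l -> bigcup S a) ->
  l = nil \/ exists P, S P /\ forall a, In a l -> P a.
Proof.
  intros HS; induction l as [|a l IH]; intro H; [left; auto|right].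
  destruct (H a (or_introl eq_refl)) as [P [SP Pa]].
  destruct IH as [->|[Q [SQ HQ]]]. { intros b Hb; apply H; right; auto. }
  - exists P; split; auto. intros b [<-|[]]; auto.
  - destruct (HS P Q SP SQ) as [PQ|QP].
    + exists Q; split; auto. intros b [<-|Hb]; auto.
    + exists P; split; auto. intros b [<-|Hb]; auto.
Qed.

Variable good : set (set A).
Hypothesis good_bigcup : forall S, chain S -> (forall P, S P -> good P) -> good (bigcup S).

Section Tower.
Hypothesis no_maximal :
  forall P, good P -> exists Q, good Q /\ subset P Q /\ ~ subset Q P.

Definition next (P : set A) : set A :=
  match excluded_middle_informative (good P) with
  | left h => proj1_sig (constructive_indefinite_description _ (no_maximal h))
  | right _ => P
  end.

Lemma subset_next P : subset P (next P).
Proof.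
  unfold next; destruct (excluded_middle_informative _) as [h|h]; [|intros a Ha; exact Ha].
  exact (proj1 (proj2 (proj2_sig (constructive_indefinite_description _ (no_maximal h))))).
Qed.

Lemma next_good P : good P -> good (next P) /\ ~ subset (next P) P.
Proof.
  intros GP; unfold next; destruct (excluded_middle_informative _) as [h|h]; [|contradiction].
  pose proof (proj2_sig (constructive_indefinite_description _ (no_maximal h))) as HQ.
  simpl in HQ; tauto.
Qed.

Definition tower (C : set A) : Prop :=
  forall F : set (set A), (forall P, F P -> F (next P)) ->
    (forall S, (forall P, S P -> F P) -> F (bigcup S)) -> F C.

Lemma tower_next P : tower P -> tower (next P).
Proof. intros HP F a b; apply a, HP; auto. Qed.

Lemma tower_bigcup S : (forall P, S P -> tower P) -> tower (bigcup S).
Proof. intros HS F a b; apply b; intros P HP; apply HS; auto. Qed.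

Definition extreme (C : set A) : Prop :=
  forall P, tower P -> subset P C -> ~ subset C P -> subset (next P) C.

Lemma extreme_split C : tower C -> extreme C ->
  forall P, tower P -> subset P C \/ subset (next C) P.
Proof.
  intros TC EC P TP.
  enough (H : tower P /\ (subset P C \/ subset (next C) P)) by tauto.
  apply (TP (fun Q => tower Q /\ (subset Q C \/ subset (next C) Q))).
  - intros Y [TY [HY|HY]]; (split; [apply tower_next, TY|]).
    + destruct (classic (subset C Y)) as [HCY|HCY].
      * right. rewrite (subset_antisym HY HCY). intros a h; exact h.
      * left. apply EC; auto.
    + right. intros a h; apply subset_next; auto.
  - intros S HS; split. { apply tower_bigcup; intros Q HQ; apply HS; auto. }
    destruct (classic (exists Q, S Q /\ ~ subset Q C)) as [[Q [SQ nQ]]|H].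
    + right. destruct (HS Q SQ) as [_ [HQ|HQ]]; [contradiction|].
      intros a h; exists Q; auto.
    + left. intros a [Q [SQ Qa]].
      apply NNPP; intro na. apply H; exists Q; split; [auto|intro s; apply na; auto].
Qed.

Lemma tower_extreme C : tower C -> extreme C.
Proof.
  intros TC. enough (H : tower C /\ extreme C) by tauto.
  apply (TC (fun Q => tower Q /\ extreme Q)).
  - intros Y [TY EY]; split; [apply tower_next; auto|]. intros P TP HP nP.
    destruct (extreme_split TY EY TP) as [H|H]; [|contradiction].
    destruct (classic (subset Y P)) as [HYP|HYP].
    + rewrite (subset_antisym H HYP). intros a h; exact h.
    + intros a h; apply subset_next; apply (EY P TP H HYP); auto.
  - intros S HS. split. { apply tower_bigcup; intros Y HY; apply HS; auto. }
    intros P TP HP nP.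
    destruct (not_all_ex_not _ _ nP) as [a0 Ha0].
    apply imply_to_and in Ha0; destruct Ha0 as [[D [SD Da0]] nPa0].
    destruct (HS D SD) as [TD ED].
    destruct (extreme_split TD ED TP) as [H|H].
    2:{ exfalso; apply nPa0, H, subset_next, Da0. }
    destruct (classic (subset D P)) as [HDP|HDP].
    + exfalso; apply nPa0, HDP, Da0.
    + intros a h; exists D; split; [auto|apply (ED P TP H HDP); auto].
Qed.

Lemma tower_chain : chain tower.
Proof.
  intros P Q TP TQ. destruct (extreme_split TQ (tower_extreme TQ) TP) as [H|H]; [left; auto|].
  right; intros a h; apply H, subset_next, h.
Qed.

Lemma tower_good P : tower P -> good P.
Proof.
  intros TP. enough (H : tower P /\ good P) by tauto.
  apply (TP (fun Q => tower Q /\ good Q)).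
  - intros Q [TQ GQ]; split; [apply tower_next|apply next_good]; auto.
  - intros S HS. split. { apply tower_bigcup; intros Q HQ; apply HS; auto. }
    apply good_bigcup; [|intros Q SQ; apply HS; auto].
    intros Q R SQ SR; apply tower_chain; apply HS; auto.
Qed.

(* Bourbaki-Witt: the tower is a chain of good sets, so its union U is a good member
   of the tower; then [next U] belongs to the tower as well, hence is contained in U. *)
Lemma no_maximal_absurd : False.
Proof.
  pose (U := bigcup tower).
  assert (TU : tower U) by (apply tower_bigcup; auto).
  apply (proj2 (next_good (tower_good TU))).
  intros a h; exists (next U); split; auto; apply tower_next, TU.
Qed.

End Tower.

Lemma zorn : exists P, good P /\ forall Q, good Q -> subset P Q -> subset Q P.
Proof.
  apply NNPP; intro Hno. apply no_maximal_absurd.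
  intros P GP. apply NNPP; intro H. apply Hno. exists P; split; auto.
  intros Q GQ PQ. apply NNPP; intro nQP. apply H. exists Q; auto.
Qed.

End Zorn.

Section VsCompact.
Variables (X : Type) (tX : topology X).

Definition agree (h h' : Vs tX) (L : list (V tX)) : Prop :=
  forall B, In B L -> proj1_sig h B = proj1_sig h' B.

Definition sat (cs : list (V tX * bool)) (h : Vs tX) : Prop :=
  forall c, In c cs -> proj1_sig h (fst c) = snd c.

Variable nbhd : Vs tX -> list (V tX) -> Prop.

(* Finitely many basic neighbourhoods [agree _ h L] with [nbhd h L] cover the points
   satisfying the constraints [cs]. *)
Definition coverable (cs : list (V tX * bool)) : Prop :=
  exists l : list (Vs tX * list (V tX)), (forall p, In p l -> nbhd (fst p) (snd p)) /\
    forall h', sat cs h' -> exists p, In p l /\ agree h' (fst p) (snd p).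

Definition consistent (P : set (V tX * bool)) : Prop :=
  forall cs, (forall c, In c cs -> P c) -> ~ coverable cs.

Lemma coverable_weaken cs cs' :
  coverable cs -> (forall h, sat cs' h -> sat cs h) -> coverable cs'.
Proof. intros [l [H1 H2]] H; exists l; split; auto. Qed.

Lemma coverable_unsat cs : (forall h, ~ sat cs h) -> coverable cs.
Proof.
  intros H; exists nil; split; [intros p []|]. intros h' Hs; exfalso; exact (H h' Hs).
Qed.

Lemma coverable_case cs0 cs1 B :
  coverable ((B, false) :: cs0) -> coverable ((B, true) :: cs1) -> coverable (cs0 ++ cs1).
Proof.
  intros [l0 [L0 R0]] [l1 [L1 R1]].
  exists (l0 ++ l1); split.
  - intros p Hp; apply in_app_or in Hp; destruct Hp; auto.
  - intros h' Hs.
    assert (Hcons : forall b cs, (forall c, In c cs -> In c (cs0 ++ cs1)) ->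
      proj1_sig h' B = b -> sat ((B, b) :: cs) h').
    { intros b cs Hcs Hb c [<-|Hc]; auto. }
    destruct (proj1_sig h' B) eqn:E.
    + destruct (R1 h') as [p [Hp Ap]]. { apply Hcons; auto; intros; apply in_or_app; auto. }
      exists p; split; auto. apply in_or_app; auto.
    + destruct (R0 h') as [p [Hp Ap]]. { apply Hcons; auto; intros; apply in_or_app; auto. }
      exists p; split; auto. apply in_or_app; auto.
Qed.

Lemma consistent_bigcup S : ~ coverable nil ->
  chain S -> (forall P, S P -> consistent P) -> consistent (bigcup S).
Proof.
  intros Hnil HS HP cs Hcs.
  destruct (chain_list_bound cs HS Hcs) as [->|[P [SP HcsP]]]; auto.
  apply (HP P SP); auto.
Qed.

Section Maximal.
Variable P : set (V tX * bool).
Hypothesis P_consistent : consistent P.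
Hypothesis P_maximal : forall Q, consistent Q -> subset P Q -> subset Q P.

Lemma maximal_extend B b : ~ P (B, b) ->
  exists cs, (forall c, In c cs -> P c) /\ coverable ((B, b) :: cs).
Proof.
  intros nP.
  assert (nQ : ~ consistent (fun c => P c \/ c = (B, b))).
  { intro HQ. apply nP, (P_maximal HQ); [intros c Hc; left; auto|right; auto]. }
  apply not_all_ex_not in nQ; destruct nQ as [cs Hcs].
  apply imply_to_and in Hcs; destruct Hcs as [Hcs Cv]; apply NNPP in Cv.
  destruct (list_select Hcs) as [cs' [H1 H2]].
  exists cs'; split; auto. apply coverable_weaken with cs; auto.
  intros h Hs c Hc. destruct (H2 c Hc) as [Hc'| ->]; apply Hs; [right|left]; auto.
Qed.

Lemma maximal_total B : P (B, false) \/ P (B, true).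
Proof.
  apply NNPP; intro nT.
  destruct (@maximal_extend B false) as [cs0 [P0 C0]]; [tauto|].
  destruct (@maximal_extend B true) as [cs1 [P1 C1]]; [tauto|].
  apply (@P_consistent (cs0 ++ cs1)); [|apply coverable_case with B; auto].
  intros c Hc; apply in_app_or in Hc; destruct Hc; auto.
Qed.

Definition maximal_value (B : V tX) : bool :=
  if excluded_middle_informative (P (B, true)) then true else false.

Lemma maximal_value_spec B : P (B, maximal_value B).
Proof.
  unfold maximal_value; destruct (excluded_middle_informative _); auto.
  destruct (maximal_total B); tauto.
Qed.

Lemma maximal_value_additive A B :
  maximal_value (vadd A B) = xorb (maximal_value A) (maximal_value B).
Proof.
  apply NNPP; intro nE.
  apply (@P_consistent ((A, maximal_value A) :: (B, maximal_value B) ::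
                       (vadd A B, maximal_value (vadd A B)) :: nil)).
  { intros c [<-|[<-|[<-|[]]]]; apply maximal_value_spec. }
  apply coverable_unsat; intros h Hs.
  pose proof (Hs _ (or_introl eq_refl)) as E0.
  pose proof (Hs _ (or_intror (or_introl eq_refl))) as E1.
  pose proof (Hs _ (or_intror (or_intror (or_introl eq_refl)))) as E2.
  simpl in E0, E1, E2. rewrite (proj2_sig h), E0, E1 in E2. auto.
Qed.

Definition maximal_point : Vs tX := exist _ maximal_value maximal_value_additive.

End Maximal.

(* Compactness of V*, phrased with basic neighbourhoods; the point of V* not covered
   is read off a maximal consistent set of constraints (Zorn). *)
Lemma Vs_finite_subcover : (forall h, exists L, nbhd h L) ->
  exists l : list (Vs tX * list (V tX)), (forall p, In p l -> nbhd (fst p) (snd p)) /\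
    forall h', exists p, In p l /\ agree h' (fst p) (snd p).
Proof.
  intros Hnbhd.
  enough (H : coverable nil).
  { destruct H as [l [H1 H2]]; exists l; split; auto. intro h'; apply H2; intros c []. }
  apply NNPP; intro nC.
  destruct (@zorn _ consistent) as [P [HP HPmax]].
  { intros S; apply consistent_bigcup; auto. }
  destruct (Hnbhd (maximal_point HP HPmax)) as [L HL].
  apply (@HP (map (fun B => (B, maximal_value P B)) L)).
  { intros c Hc; apply in_map_iff in Hc; destruct Hc as [B [<- _]].
    apply maximal_value_spec; auto. }
  exists ((maximal_point HP HPmax, L) :: nil); split; [intros p [<-|[]]; auto|].
  intros h' Hs. exists (maximal_point HP HPmax, L); split; [left; auto|].
  intros B HB. apply (Hs (B, maximal_value P B)), in_map_iff. exists B; auto.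
Qed.

End VsCompact.

(** * The group M *)

Arguments vact : simpl never.
Arguments vadd : simpl never.
Arguments vsact : simpl never.
Arguments vsadd : simpl never.

Section Algebra.
Variables (X : Type) (tX : topology X).

Lemma homeo_eq (a b : homeo tX) : (forall x, hf a x = hf b x) -> (forall x, hg a x = hg b x) -> a = b.
Proof.
  destruct a as [fa ga a1 a2 a3 a4], b as [fb gb b1 b2 b3 b4]; simpl; intros H1 H2.
  assert (fa = fb) by (apply functional_extensionality; auto). subst fb.
  assert (ga = gb) by (apply functional_extensionality; auto). subst gb.
  f_equal; apply proof_irrelevance.
Qed.

Lemma homeo_ext (a b : homeo tX) : (forall x, hf a x = hf b x) -> a = b.
Proof.
  intros H. apply homeo_eq; auto. intro y.
  rewrite <- (hfg b y) at 1. rewrite <- H, hgf; reflexivity.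
Qed.

Lemma Gt_eq (G : hsubgroup tX) (a b : Gt G) : proj1_sig a = proj1_sig b -> a = b.
Proof.
  destruct a as [a Ha], b as [b Hb]; simpl; intro; subst b. f_equal; apply proof_irrelevance.
Qed.

Lemma vadd_val (A B : V tX) x : proj1_sig (vadd A B) x = xorb (proj1_sig A x) (proj1_sig B x).
Proof. reflexivity. Qed.
Lemma vact_val (g : homeo tX) (A : V tX) x : proj1_sig (vact g A) x = proj1_sig A (hg g x).
Proof. reflexivity. Qed.
Lemma vzero_val x : proj1_sig (vzero tX) x = false.
Proof. reflexivity. Qed.
Lemma vsadd_val (f h : Vs tX) A : proj1_sig (vsadd f h) A = xorb (proj1_sig f A) (proj1_sig h A).
Proof. reflexivity. Qed.
Lemma vsact_val (g : homeo tX) (f : Vs tX) A : proj1_sig (vsact g f) A = proj1_sig f (vact (hinv g) A).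
Proof. reflexivity. Qed.
Lemma vszero_val A : proj1_sig (vszero tX) A = false.
Proof. reflexivity. Qed.
Lemma vs_add (f : Vs tX) A B : proj1_sig f (vadd A B) = xorb (proj1_sig f A) (proj1_sig f B).
Proof. apply (proj2_sig f). Qed.
Lemma vs_zero (f : Vs tX) : proj1_sig f (vzero tX) = false.
Proof.
  pose proof (vs_add f (vzero tX) (vzero tX)) as H.
  replace (vadd (vzero tX) (vzero tX)) with (vzero tX) in H by (apply V_eq; reflexivity).
  destruct (proj1_sig f (vzero tX)); simpl in H; auto.
Qed.

Lemma vact_comp a b (A : V tX) : vact (hcomp a b) A = vact a (vact b A).
Proof. apply V_eq; intro x; reflexivity. Qed.
Lemma vact_inv_l (g : homeo tX) A : vact (hinv g) (vact g A) = A.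
Proof. apply V_eq; intro x; rewrite !vact_val; simpl; rewrite hgf; auto. Qed.
Lemma vact_inv_r (g : homeo tX) A : vact g (vact (hinv g) A) = A.
Proof. apply V_eq; intro x; rewrite !vact_val; simpl; rewrite hfg; auto. Qed.
Lemma vact_id (A : V tX) : vact (hid tX) A = A.
Proof. apply V_eq; intro x; reflexivity. Qed.
Lemma vact_hinv_hid (A : V tX) : vact (hinv (hid tX)) A = A.
Proof. apply V_eq; intro x; reflexivity. Qed.
Lemma vact_zero (g : homeo tX) : vact g (vzero tX) = vzero tX.
Proof. apply V_eq; intro x; reflexivity. Qed.
Lemma vact_hinv2 (g : homeo tX) A : vact (hinv (hinv g)) A = vact g A.
Proof. apply V_eq; intro x; reflexivity. Qed.
Lemma vadd_0l (A : V tX) : vadd (vzero tX) A = A.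
Proof. apply V_eq; intro x; reflexivity. Qed.
Lemma vadd_0r (A : V tX) : vadd A (vzero tX) = A.
Proof. apply V_eq; intro x; rewrite vadd_val; simpl; destruct (proj1_sig A x); auto. Qed.
Lemma vadd_self (A : V tX) : vadd A A = vzero tX.
Proof. apply V_eq; intro x; rewrite vadd_val; simpl; destruct (proj1_sig A x); auto. Qed.
Lemma vadd_assoc (A B C : V tX) : vadd A (vadd B C) = vadd (vadd A B) C.
Proof. apply V_eq; intro x; rewrite !vadd_val; btauto. Qed.

Section SemidirectProduct.
Variable G : hsubgroup tX.
Definition ma (p : Mt G) : bool := fst (fst (fst p)).
Definition mx (p : Mt G) : V tX := snd (fst (fst p)).
Definition mf (p : Mt G) : Vs tX := snd (fst p).
Definition mg (p : Mt G) : Gt G := snd p.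
Definition mh (p : Mt G) : homeo tX := proj1_sig (snd p).

Lemma Mt_eq (p q : Mt G) : ma p = ma q -> mx p = mx q -> mf p = mf q -> mg p = mg q -> p = q.
Proof.
  destruct p as [[[a x] f] g], q as [[[a' x'] f'] g']; unfold ma, mx, mf, mg; simpl.
  intros; subst; auto.
Qed.

Lemma ma_mul p q : ma (Mmul p q) = xorb (xorb (ma p) (ma q)) (proj1_sig (mf p) (vact (mh p) (mx q))).
Proof. destruct p as [[[a x] f] g], q as [[[a' x'] f'] g']; reflexivity. Qed.
Lemma mx_mul p q : mx (Mmul p q) = vadd (mx p) (vact (mh p) (mx q)).
Proof. destruct p as [[[a x] f] g], q as [[[a' x'] f'] g']; reflexivity. Qed.
Lemma mf_mul p q : mf (Mmul p q) = vsadd (mf p) (vsact (mh p) (mf q)).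
Proof. destruct p as [[[a x] f] g], q as [[[a' x'] f'] g']; reflexivity. Qed.
Lemma mg_mul p q : mg (Mmul p q) = Gmul (mg p) (mg q).
Proof. destruct p as [[[a x] f] g], q as [[[a' x'] f'] g']; reflexivity. Qed.
Lemma mh_mul p q : mh (Mmul p q) = hcomp (mh p) (mh q).
Proof. destruct p as [[[a x] f] g], q as [[[a' x'] f'] g']; reflexivity. Qed.
Lemma ma_inv p : ma (Minv p) = xorb (ma p) (proj1_sig (mf p) (mx p)).
Proof. destruct p as [[[a x] f] g]; reflexivity. Qed.
Lemma mx_inv p : mx (Minv p) = vact (hinv (mh p)) (mx p).
Proof. destruct p as [[[a x] f] g]; reflexivity. Qed.
Lemma mf_inv p : mf (Minv p) = vsact (hinv (mh p)) (mf p).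
Proof. destruct p as [[[a x] f] g]; reflexivity. Qed.
Lemma mg_inv p : mg (Minv p) = Ginv (mg p).
Proof. destruct p as [[[a x] f] g]; reflexivity. Qed.
Lemma mh_inv p : mh (Minv p) = hinv (mh p).
Proof. destruct p as [[[a x] f] g]; reflexivity. Qed.
Lemma ma_one : ma (Mone G) = false. Proof. reflexivity. Qed.
Lemma mx_one : mx (Mone G) = vzero tX. Proof. reflexivity. Qed.
Lemma mf_one : mf (Mone G) = vszero tX. Proof. reflexivity. Qed.
Lemma mg_one : mg (Mone G) = Gone G. Proof. reflexivity. Qed.
Lemma mh_one : mh (Mone G) = hid tX. Proof. reflexivity. Qed.
Lemma Gmul_inv_l (g : Gt G) : Gmul (Ginv g) g = Gone G.
Proof. apply Gt_eq; apply homeo_eq; intro x; simpl; rewrite ?hfg, ?hgf; auto. Qed.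
Lemma Gmul_inv_r (g : Gt G) : Gmul g (Ginv g) = Gone G.
Proof. apply Gt_eq; apply homeo_eq; intro x; simpl; rewrite ?hfg, ?hgf; auto. Qed.
Lemma Gmul_1l (g : Gt G) : Gmul (Gone G) g = g.
Proof. apply Gt_eq; apply homeo_eq; intro x; reflexivity. Qed.
Lemma Gmul_1r (g : Gt G) : Gmul g (Gone G) = g.
Proof. apply Gt_eq; apply homeo_eq; intro x; reflexivity. Qed.
Lemma Gmul_assoc (a b c : Gt G) : Gmul a (Gmul b c) = Gmul (Gmul a b) c.
Proof. apply Gt_eq; apply homeo_eq; intro x; reflexivity. Qed.
Lemma Ginv_one : Ginv (Gone G) = Gone G.
Proof. apply Gt_eq; apply homeo_eq; intro x; reflexivity. Qed.

Ltac vs_ext := apply Vs_eq; intro; rewrite ?vsadd_val, ?vsact_val, ?vszero_val.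

Lemma Mmul_1l p : Mmul (Mone G) p = p.
Proof.
  apply Mt_eq.
  - rewrite ma_mul, ma_one, mf_one, vszero_val; destruct (ma p); auto.
  - rewrite mx_mul, mx_one, mh_one, vadd_0l, vact_id; auto.
  - rewrite mf_mul, mf_one, mh_one. vs_ext. rewrite vact_hinv_hid; auto.
  - rewrite mg_mul, mg_one, Gmul_1l; auto.
Qed.

Lemma Mmul_1r p : Mmul p (Mone G) = p.
Proof.
  apply Mt_eq.
  - rewrite ma_mul, ma_one, mx_one, vact_zero, vs_zero; destruct (ma p); auto.
  - rewrite mx_mul, mx_one, vact_zero, vadd_0r; auto.
  - rewrite mf_mul, mf_one. vs_ext. destruct (proj1_sig (mf p) _); auto.
  - rewrite mg_mul, mg_one, Gmul_1r; auto.
Qed.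

Lemma Mmul_Vl p : Mmul (Minv p) p = Mone G.
Proof.
  apply Mt_eq.
  - rewrite ma_mul, ma_inv, mf_inv, mh_inv, vsact_val, vact_hinv2, vact_inv_r, ma_one; btauto.
  - rewrite mx_mul, mx_inv, mh_inv, vadd_self; auto.
  - rewrite mf_mul, mf_inv, mh_inv. vs_ext. rewrite vact_hinv2. btauto.
  - rewrite mg_mul, mg_inv, Gmul_inv_l; auto.
Qed.

Lemma Mmul_Vr p : Mmul p (Minv p) = Mone G.
Proof.
  apply Mt_eq.
  - rewrite ma_mul, ma_inv, mx_inv, vact_inv_r, ma_one; btauto.
  - rewrite mx_mul, mx_inv, vact_inv_r, vadd_self; auto.
  - rewrite mf_mul, mf_inv. vs_ext. rewrite vact_hinv2, vact_inv_r. btauto.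
  - rewrite mg_mul, mg_inv, Gmul_inv_r; auto.
Qed.

Lemma Mmul_assoc (p q r : Mt G) : Mmul p (Mmul q r) = Mmul (Mmul p q) r.
Proof.
  apply Mt_eq.
  - rewrite !ma_mul, !mx_mul, !mf_mul, !mh_mul, vsadd_val, vsact_val, vact_comp,
      vact_inv_l, (vact_add (mh p)), vs_add. btauto.
  - rewrite !mx_mul, !mh_mul, vact_comp, (vact_add (mh p)), vadd_assoc; auto.
  - rewrite !mf_mul, !mh_mul. apply Vs_eq; intro x; rewrite !vsadd_val, !vsact_val, !vsadd_val, !vsact_val.
    replace (vact (hinv (hcomp (mh p) (mh q))) x) with (vact (hinv (mh q)) (vact (hinv (mh p)) x))
      by (apply V_eq; intro; reflexivity). btauto.
  - rewrite !mg_mul, Gmul_assoc; auto.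
Qed.

Lemma Minv_one : Minv (Mone G) = Mone G.
Proof. rewrite <- (Mmul_1r (Minv (Mone G))). apply Mmul_Vl. Qed.

Lemma Mmul_cancel (p y : Mt G) : Mmul p (Mmul (Minv p) y) = y.
Proof. rewrite Mmul_assoc, Mmul_Vr, Mmul_1l; auto. Qed.

End SemidirectProduct.

End Algebra.

Section SpecialElements.
Variables (X : Type) (tX : topology X) (G : hsubgroup tX).

Definition Vs_pt (h : Vs tX) : Mt G := ((false, vzero tX, h), Gone G).
Definition V_pt (B : V tX) : Mt G := ((false, B, vszero tX), Gone G).
Definition G_pt (g : Gt G) : Mt G := ((false, vzero tX, vszero tX), g).
(* The points of the coset (1, 0, V*, 1), which does not meet V* = (0, 0, V*, 1). *)
Definition odd_pt (h : Vs tX) : Mt G := ((true, vzero tX, h), Gone G).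
Definition Mcomm (u v : Mt G) : Mt G := Mmul (Mmul u v) (Mmul (Minv u) (Minv v)).
Definition Mconj (v u : Mt G) : Mt G := Mmul (Mmul u v) (Minv u).

Definition eval_at (x0 : X) : Vs tX :=
  exist (fun f : V tX -> bool => forall A B, f (vadd A B) = xorb (f A) (f B))
    (fun B => proj1_sig B x0) (fun A B => eq_refl).

Lemma ma_odd_pt h : ma (odd_pt h) = true. Proof. reflexivity. Qed.

Lemma Mcomm_Vs_pt (u : Mt G) (h : Vs tX) :
  proj1_sig h (vact (hinv (mh u)) (mx u)) = true ->
  Mcomm u (Vs_pt h) = odd_pt (mf (Mcomm u (Vs_pt h))).
Proof.
  intro Hh. unfold Mcomm, Vs_pt. apply Mt_eq; [| |reflexivity|].
  - rewrite ma_odd_pt, !ma_mul, !ma_inv, !mx_mul, !mx_inv, !mf_mul, !mf_inv, !mh_mul, !mh_inv.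
    cbn [ma mx mf mh fst snd proj1_sig Gone]. rewrite !vsadd_val, !vsact_val, !vact_zero,
      !vs_zero, vadd_0r, vact_comp, vact_id, vact_inv_r, Hh. simpl; btauto.
  - rewrite !mx_mul, !mx_inv, !mh_mul, !mh_inv. cbn [ma mx mf mh fst snd proj1_sig Gone].
    rewrite !vact_zero, !vadd_0r, vact_comp, vact_id, vact_inv_r, vadd_self; reflexivity.
  - rewrite !mg_mul, !mg_inv. cbn [mg snd].
    rewrite Ginv_one, !Gmul_1r, Gmul_inv_r; reflexivity.
Qed.

Lemma Mmul_G_pt_inv (u : Mt G) : ma u = true -> mx u = vzero tX ->
  Mmul u (G_pt (Ginv (mg u))) = odd_pt (mf u).
Proof.
  intros Ha Hx. apply Mt_eq.
  - rewrite ma_mul, Ha. unfold G_pt, odd_pt; cbn [ma mx fst snd]. rewrite vact_zero, vs_zero; auto.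
  - rewrite mx_mul, Hx. unfold G_pt, odd_pt; cbn [mx fst snd]. rewrite vact_zero, vadd_0l; auto.
  - rewrite mf_mul. unfold G_pt, odd_pt; cbn [mf fst snd]. apply Vs_eq; intro B.
    rewrite vsadd_val, vsact_val, vszero_val. destruct (proj1_sig (mf u) B); auto.
  - rewrite mg_mul, Gmul_inv_r; reflexivity.
Qed.

Lemma Mconj_V_pt_mx (C : V tX) (u : Mt G) x :
  proj1_sig (mx (Mmul (Minv (V_pt C)) (Mconj (V_pt C) u))) x =
  xorb (proj1_sig C x) (proj1_sig C (hg (mh u) x)).
Proof.
  unfold Mconj, V_pt. rewrite !mx_mul, !mx_inv, !mh_mul, !mh_inv. cbn [mx mh fst snd proj1_sig Gone].
  rewrite !vadd_val, !vact_val. simpl. rewrite hfg. btauto.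
Qed.

Lemma Mconj_V_pt_ma (B : V tX) (u : Mt G) : vact (mh u) B = B ->
  ma (Mmul (Minv (V_pt B)) (Mconj (V_pt B) u)) = proj1_sig (mf u) B.
Proof.
  intro HB. unfold Mconj, V_pt.
  rewrite !ma_mul, !ma_inv, !mx_mul, !mx_inv, !mf_mul, !mf_inv, !mh_mul, !mh_inv.
  cbn [ma mx mf mh fst snd proj1_sig Gone].
  rewrite !vsadd_val, !vsact_val, !vszero_val, HB, vact_comp, vact_id, vact_inv_r.
  btauto.
Qed.

End SpecialElements.

Arguments Vs_pt {X tX G} h.
Arguments V_pt {X tX G} B.
Arguments odd_pt {X tX G} h.
Arguments eval_at {X tX} x0.

(** * Topology of G and of M *)

Section Clopens.
Variables (X : Type) (tX : topology X).

Lemma bool_binop_cont (op : bool -> bool -> bool) (a b : X -> bool) :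
  continuous tX (@discrete_top bool) a -> continuous tX (@discrete_top bool) b ->
  continuous tX (@discrete_top bool) (fun x => op (a x) (b x)).
Proof.
  intros Ha Hb U _.
  apply open_ext with (A := fun x => exists S,
     (exists u v, U (op u v) /\ S = (fun y => a y = u /\ b y = v)) /\ S x).
  - intro x; split.
    + intros [S [[u [v [HU ->]]] [Hx Hy]]]; rewrite Hx, Hy; exact HU.
    + intro HU. exists (fun y => a y = a x /\ b y = b x); split; [|split; reflexivity].
      exists (a x), (b x); split; [exact HU | reflexivity].
  - apply open_union; [apply open_is_topology|]. intros S [u [v [_ ->]]].
    apply open_inter; [apply open_is_topology| |].
    + apply (Ha (fun w => w = u)); exact I.
    + apply (Hb (fun w => w = v)); exact I.
Qed.

Definition vor (A B : V tX) : V tX :=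
  exist _ (fun x => orb (proj1_sig A x) (proj1_sig B x))
    (bool_binop_cont orb (proj2_sig A) (proj2_sig B)).

Lemma V_union_list (l : list (V tX)) : exists c : V tX,
  forall x, proj1_sig c x = true <-> exists A, In A l /\ proj1_sig A x = true.
Proof.
  induction l as [|A l [c Hc]].
  - exists (vzero tX); intro x; split; [discriminate|intros [A [[] _]]].
  - exists (vor A c); intro x; simpl. rewrite orb_true_iff, Hc; split.
    + intros [H|[B [HB H]]]; [exists A|exists B]; auto.
    + intros [B [[<-|HB] H]]; [left|right; exists B]; auto.
Qed.

Lemma V_level_open (A : V tX) b : open tX (fun x => proj1_sig A x = b).
Proof. apply (proj2_sig A (fun w => w = b)); exact I. Qed.

Lemma clopen_indicator (C : set X) : clopen (open tX) C ->
  exists c : V tX, forall x, proj1_sig c x = true <-> C x.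
Proof.
  intros [HC HnC].
  pose (cf := fun x => if excluded_middle_informative (C x) then true else false).
  assert (Ecf : forall x b, cf x = b <-> (if b then C x else ~ C x)).
  { intros x b; unfold cf; destruct (excluded_middle_informative (C x)), b;
      split; auto; try discriminate; tauto. }
  assert (Hc : continuous tX (@discrete_top bool) cf).
  { intros U _. apply open_ext with (A := fun x => exists b, U b /\ cf x = b).
    - intro x; split; [intros [b [Ub <-]]; auto|intro; exists (cf x); auto].
    - apply open_ext with
        (A := fun x => exists S, (exists b, U b /\ S = (fun y => cf y = b)) /\ S x).
      + intro x; split; [intros [S [[b [Ub ->]] Sx]]; eauto|].
        intros [b [Ub Eb]]; exists (fun y => cf y = b); split; eauto.
      + apply open_union; [apply open_is_topology|]. intros S [[|] [_ ->]].
        * apply open_ext with (A := C); auto. intro y; rewrite Ecf; tauto.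
        * apply open_ext with (A := fun x => ~ C x); auto. intro y; rewrite Ecf; tauto. }
  exists (exist _ cf Hc); intro x; simpl. rewrite Ecf; tauto.
Qed.

Lemma singleton_compact (x0 : X) : compact_set tX (fun y => y = x0).
Proof.
  intros F HF Hcov. destruct (Hcov x0 eq_refl) as [A [FA Ax]].
  exists (A :: nil); split.
  - intros B [<-|[]]; auto.
  - intros x ->; exists A; split; [left|]; auto.
Qed.

Hypothesis Hst : stone_space (open tX).

Lemma closed_compact (K : set X) : open tX (fun x => ~ K x) -> compact_set tX K.
Proof.
  intros HK F HF Hcov.
  destruct (proj1 Hst (fun A => F A \/ A = (fun x => ~ K x))) as [l [Hl1 Hl2]].
  - intros A [FA| ->]; auto.
  - intros x _. destruct (classic (K x)) as [Kx|nK].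
    + destruct (Hcov x Kx) as [A [FA Ax]]; exists A; auto.
    + exists (fun x => ~ K x); auto.
  - destruct (list_select Hl1) as [l' [H1 H2]]. exists l'; split; auto.
    intros x Kx. destruct (Hl2 x I) as [A [HA Ax]].
    destruct (H2 A HA) as [HA'| ->]; [exists A; auto|contradiction].
Qed.

Lemma clopen_between (K U : set X) : compact_set tX K -> open tX U -> (forall x, K x -> U x) ->
  exists c : V tX, (forall x, K x -> proj1_sig c x = true) /\
                   (forall x, proj1_sig c x = true -> U x).
Proof.
  intros HK HU KU.
  pose (R := fun (A : set X) (c : V tX) =>
    (forall y, proj1_sig c y = true -> U y) /\ A = (fun y => proj1_sig c y = true)).
  destruct (HK (fun A => exists c, R A c)) as [l [Hl1 Hl2]].
  - intros A [c [_ ->]]; apply V_level_open.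
  - intros x Kx. destruct (proj2 (proj2 Hst) U x HU (KU x Kx)) as [C [HC [Cx CU]]].
    destruct (clopen_indicator HC) as [c Hc].
    exists (fun y => proj1_sig c y = true); split; [|apply Hc; auto].
    exists c; split; auto. intros y Hy; apply CU, Hc, Hy.
  - destruct (list_choice Hl1) as [lc [Hlc1 Hlc2]].
    destruct (V_union_list lc) as [c Hc]. exists c; split.
    + intros x Kx. destruct (Hl2 x Kx) as [A [HA Ax]].
      destruct (Hlc1 A HA) as [c' [Hc' [_ EA]]]. subst A.
      apply Hc; exists c'; auto.
    + intros x Hx. apply Hc in Hx; destruct Hx as [c' [Hc' Hx]].
      destruct (Hlc2 c' Hc') as [A [_ [Hc'U _]]]; auto.
Qed.

End Clopens.

Section HomeoGroup.
Variables (X : Type) (tX : topology X) (G : hsubgroup tX).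

Lemma G_is_topology : is_topology (@G_top X tX G).
Proof. apply sub_top_is_topology, gen_top_is_topology. Qed.

Lemma G_subbasic_open (K U : set X) : compact_set tX K -> open tX U ->
  G_top (fun g : Gt G => forall x, K x -> U (hf (proj1_sig g) x)).
Proof.
  intros HK HU. exists (fun h => forall x, K x -> U (hf h x)); split; [|intro; tauto].
  intros h Hh. exists ((fun h => forall x, K x -> U (hf h x)) :: nil). split; [|split].
  - intros B [<-|[]]. exists K, U; repeat split; auto.
  - intros B [<-|[]]; auto.
  - intros y Hy; apply (Hy _ (or_introl eq_refl)).
Qed.

Definition transports (g : Gt G) (C D : V tX) : Prop :=
  forall x, proj1_sig D (hf (proj1_sig g) x) = proj1_sig C x.

Definition stab (C : V tX) (g : Gt G) : Prop := transports g C C.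

Hypothesis Hst : stone_space (open tX).

Lemma G_transport_open (C D : V tX) : G_top (fun g : Gt G => transports g C D).
Proof.
  assert (Hlevel : forall b, compact_set tX (fun x => proj1_sig C x = b)).
  { intro b. apply (closed_compact tX Hst).
    apply open_ext with (A := fun x => proj1_sig C x = negb b); [|apply V_level_open].
    intro x; destruct (proj1_sig C x), b; simpl; intuition discriminate. }
  apply open_ext with (A := fun g : Gt G =>
    (forall x, proj1_sig C x = true -> proj1_sig D (hf (proj1_sig g) x) = true) /\
    (forall x, proj1_sig C x = false -> proj1_sig D (hf (proj1_sig g) x) = false)).
  - intro g; split.
    + intros [H1 H2] x. destruct (proj1_sig C x) eqn:E; auto.
    + intros H; split; intros x Hx; rewrite H; auto.
  - apply open_inter; [apply G_is_topology| |].
    + exact (G_subbasic_open (fun z => proj1_sig D z = true) (Hlevel true) (V_level_open D true)).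
    + exact (G_subbasic_open (fun z => proj1_sig D z = false) (Hlevel false) (V_level_open D false)).
Qed.

(* The compact-open topology near the identity is that of pointwise stabilisers of
   finitely many clopen sets: a subbasic [h(K) ⊆ U] contains the stabiliser of a
   clopen [c] with [K ⊆ c ⊆ U]. *)
Lemma G_nbhd_stab (N : set (Gt G)) : G_top N -> N (Gone G) ->
  exists Cs : list (V tX), forall g, (forall C, In C Cs -> stab C g) -> N g.
Proof.
  intros [W' [HW' HN]] N1. apply HN in N1.
  destruct (HW' _ N1) as [l [Hl1 [Hl2 Hl3]]].
  destruct (list_choice (R := fun B c => forall g, stab c g -> B (proj1_sig g)) (l := l))
    as [Cs [HCs _]].
  - intros B HB. destruct (Hl1 B HB) as [K [U [HK [HU EB]]]].
    pose proof (Hl2 B HB) as Bid. rewrite EB in Bid.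
    destruct (clopen_between tX Hst _ HK HU Bid) as [c [c1 c2]].
    exists c; intros g Hg. apply EB. intros x Kx. apply c2. rewrite Hg; auto.
  - exists Cs; intros g Hg. apply HN, Hl3. intros B HB.
    destruct (HCs B HB) as [c [Hc Hcg]]. apply Hcg, Hg, Hc.
Qed.

Lemma G_hausdorff : hausdorff (@G_top X tX G).
Proof.
  intros g1 g2 Hne.
  assert (Hx : exists x, hf (proj1_sig g1) x <> hf (proj1_sig g2) x).
  { apply NNPP; intro H. apply Hne, Gt_eq, homeo_ext.
    intro x; apply NNPP; intro H'; apply H; eauto. }
  destruct Hx as [x Hx]. destruct Hst as [_ [Hh Hz]].
  destruct (Hh _ _ Hx) as [U [W [HU [HW [Ux [Wy Hd]]]]]].
  destruct (Hz U _ HU Ux) as [C [HC [Cx CU]]].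
  destruct (clopen_indicator tX HC) as [c Hc].
  exists (fun g : Gt G => forall y, y = x -> proj1_sig c (hf (proj1_sig g) y) = true),
         (fun g : Gt G => forall y, y = x -> proj1_sig c (hf (proj1_sig g) y) = false).
  pose proof (singleton_compact tX (x0 := x)) as Kx.
  split; [exact (G_subbasic_open _ Kx (V_level_open c true))|].
  split; [exact (G_subbasic_open _ Kx (V_level_open c false))|].
  split; [intros y ->; apply Hc; auto|].
  split; [intros y ->; apply not_true_is_false; intro E;
          apply (Hd (hf (proj1_sig g2) x)); auto; apply CU, Hc, E|].
  intros g H1 H2. pose proof (H1 x eq_refl) as E. rewrite (H2 x eq_refl) in E; discriminate.
Qed.

End HomeoGroup.

Section Mnbhd.
Variables (X : Type) (tX : topology X) (G : hsubgroup tX).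

Definition Mnbhd (p : Mt G) (L : list (V tX)) (N : set (Gt G)) : set (Mt G) :=
  fun q => ma q = ma p /\ mx q = mx p /\
    (forall B, In B L -> proj1_sig (mf q) B = proj1_sig (mf p) B) /\ N (mg q).

Lemma Mnbhd_self (p : Mt G) L (N : set (Gt G)) : N (mg p) -> Mnbhd p L N p.
Proof. intro H; unfold Mnbhd; auto. Qed.

Lemma Vs_gen_nbhd (f0 : Vs tX) (l : list (set (Vs tX))) :
  (forall S, In S l -> exists A b, forall f, S f <-> proj1_sig f A = b) ->
  (forall S, In S l -> S f0) ->
  exists L : list (V tX), forall f : Vs tX,
    (forall B, In B L -> proj1_sig f B = proj1_sig f0 B) -> forall S, In S l -> S f.
Proof.
  intros H1 H2.
  destruct (list_choice (R := fun S A => exists b, forall f, S f <-> proj1_sig f A = b) H1)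
    as [L [HL _]].
  exists L; intros f Hf S HS. destruct (HL S HS) as [A [HA [b Eb]]].
  apply Eb. rewrite Hf by auto. apply Eb, H2, HS.
Qed.

Lemma prod_discrete_open (T1 T2 : Type) (W : set (T1 * T2)) :
  prod_top (@discrete_top T1) (@discrete_top T2) W.
Proof.
  intros p Wp. exists (fun a => a = fst p), (fun b => b = snd p).
  split; [exact I|split; [exact I|split; [auto|split; [auto|]]]].
  intros q H1 H2. destruct p, q; simpl in *; subst; auto.
Qed.

Lemma M_open_nbhd {U : set (Mt G)} {p : Mt G} : M_top U -> U p ->
  exists L N, G_top N /\ N (mg p) /\ forall q, Mnbhd p L N q -> U q.
Proof.
  intros HU Up. destruct (HU p Up) as [A [B [HA [HB [Ap [Bp HAB]]]]]].
  destruct (HA _ Ap) as [A1 [A2 [HA1 [HA2 [A1p [A2p HA12]]]]]].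
  destruct (HA2 _ A2p) as [l [Hl1 [Hl2 Hl3]]].
  destruct (Vs_gen_nbhd l Hl1 Hl2) as [L HL].
  exists L, B; split; [auto|split; [auto|]].
  intros q [E1 [E2 [E3 E4]]]. apply HAB; auto. apply HA12.
  - destruct q as [[[a x] f] g], p as [[[a' x'] f'] g']; unfold ma, mx in *.
    simpl in *; subst; auto.
  - apply Hl3, HL; auto.
Qed.

Lemma Mnbhd_open (p : Mt G) L N : G_top N -> M_top (Mnbhd p L N).
Proof.
  intros HN q [E1 [E2 [E3 E4]]].
  pose (FL := fun f : Vs tX => forall B, In B L -> proj1_sig f B = proj1_sig (mf p) B).
  exists (fun r : HX tX => fst r = fst (fst p) /\ FL (snd r)), N.
  split; [|split; [auto|split; [|split; [auto|]]]].
  - intros r [R1 R2].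
    exists (fun s => s = fst r), FL.
    split; [apply prod_discrete_open|split; [|split; [auto|split; [auto|]]]].
    + intros f Hf. exists (map (fun B => fun f : Vs tX => proj1_sig f B = proj1_sig (mf p) B) L).
      split; [|split].
      * intros S HS; apply in_map_iff in HS; destruct HS as [B [<- _]].
        exists B, (proj1_sig (mf p) B); intro; tauto.
      * intros S HS; apply in_map_iff in HS; destruct HS as [B [<- HB]]; auto.
      * intros f' Hf' B HB. apply (Hf' (fun f : Vs tX => proj1_sig f B = proj1_sig (mf p) B)).
        apply in_map_iff; exists B; auto.
    + intros s Hs1 Hs2; split; auto. rewrite Hs1; auto.
  - split; auto. destruct q as [[[a x] f] g], p as [[[a' x'] f'] g'].
    unfold ma, mx in *; simpl in *; subst; auto.
  - intros r [R1 R2] Nr. destruct r as [[[a x] f] g], p as [[[a' x'] f'] g'].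
    simpl in *. unfold Mnbhd, ma, mx, mf, mg; simpl. injection R1; intros; subst; auto.
Qed.

Lemma M_is_topology : is_topology (@M_top X tX G).
Proof.
  apply prod_top_is_topology; [|apply G_is_topology].
  apply prod_top_is_topology; [|apply gen_top_is_topology].
  apply prod_top_is_topology; apply discrete_is_topology.
Qed.

End Mnbhd.

Section MTopologicalGroup.
Variables (X : Type) (tX : topology X) (G : hsubgroup tX).

Lemma vact_transport (g : Gt G) (C D : V tX) : transports g C D -> vact (proj1_sig g) C = D.
Proof. intro H; apply V_eq; intro x; rewrite vact_val, <- H, hfg; auto. Qed.

Lemma vact_inv_transport (g : Gt G) (h : homeo tX) (B : V tX) :
  transports g (vact (hinv h) B) B -> vact (hinv (proj1_sig g)) B = vact (hinv h) B.
Proof. intro H; apply V_eq; intro x; rewrite vact_val; simpl; rewrite H; auto. Qed.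

Hypothesis Hst : stone_space (open tX).

Lemma G_transport_list_open (L : list (V tX)) (F : V tX -> V tX) :
  G_top (fun g : Gt G => forall B, In B L -> transports g (F B) B).
Proof.
  apply open_list_inter with (P := fun B g => transports g (F B) B); [apply G_is_topology|].
  intro B; apply G_transport_open, Hst.
Qed.

Hypothesis HGt : is_topological_group (@Gmul X tX G) (@Ginv X tX G) (@G_top X tX G).

Lemma Mmul_cont : continuous (prod_top (@M_top X tX G) (@M_top X tX G)) (@M_top X tX G)
  (fun p => Mmul (fst p) (snd p)).
Proof.
  intros U HU [p q] Upq. simpl in Upq.
  destruct (M_open_nbhd HU Upq) as [L [N [HN [Nr Hsub]]]].
  rewrite mg_mul in Nr.
  destruct (mul_cont_at HGt _ _ _ HN Nr) as [N1 [N2 [HN1 [HN2 [N1p [N2q HN12]]]]]].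
  pose (Np := fun g => N1 g /\ transports g (mx q) (vact (mh p) (mx q)) /\
                       forall B, In B L -> transports g (vact (hinv (mh p)) B) B).
  exists (Mnbhd p (vact (mh p) (mx q) :: L) Np), (Mnbhd q (map (vact (hinv (mh p))) L) N2).
  split. { apply Mnbhd_open. repeat apply open_inter; auto using G_is_topology,
             G_transport_open, G_transport_list_open. }
  split; [apply Mnbhd_open; auto|].
  split. { apply Mnbhd_self; split; [auto|split].
    - intro x; rewrite vact_val; unfold mh; rewrite hgf; auto.
    - intros B _ x; reflexivity. }
  split; [apply Mnbhd_self; auto|].
  intros [p' q'] [E1 [E2 [E3 [E4 [E5 E6]]]]] [F1 [F2 [F3 F4]]]. simpl in *.
  apply Hsub.
  assert (V1 : vact (mh p') (mx q') = vact (mh p) (mx q))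
    by (rewrite F2; apply vact_transport, E5).
  assert (V2 : forall B, In B L -> vact (hinv (mh p')) B = vact (hinv (mh p)) B)
    by (intros B HB; apply vact_inv_transport, E6, HB).
  split; [|split; [|split]].
  - rewrite !ma_mul, E1, F1, V1, (E3 _ (or_introl eq_refl)); auto.
  - rewrite !mx_mul, E2, V1; auto.
  - intros B HB. rewrite !mf_mul, !vsadd_val, !vsact_val, E3 by (right; auto).
    rewrite V2, F3 by (auto using in_map); auto.
  - rewrite mg_mul; auto.
Qed.

Lemma Minv_cont : continuous (@M_top X tX G) (@M_top X tX G) (@Minv X tX G).
Proof.
  intros U HU. apply open_of_nbhds; [apply M_is_topology|]. intros p Up.
  destruct (M_open_nbhd HU Up) as [L [N [HN [Nr Hsub]]]].
  rewrite mg_inv in Nr.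
  pose (Np := fun g => N (Ginv g) /\ transports g (vact (hinv (mh p)) (mx p)) (mx p) /\
                       forall B, In B L -> transports g B (vact (mh p) B)).
  assert (HNp : G_top Np).
  { repeat apply open_inter; auto using G_is_topology, G_transport_open.
    - apply HGt, HN.
    - apply open_list_inter; [apply G_is_topology|]. intro B; apply G_transport_open, Hst. }
  exists (Mnbhd p (mx p :: map (vact (mh p)) L) Np).
  split; [apply Mnbhd_open; auto|].
  split. { apply Mnbhd_self. split; [auto|split].
    - intro x; reflexivity.
    - intros B _ x; rewrite vact_val; unfold mh; rewrite hgf; auto. }
  intros p' [E1 [E2 [E3 [E4 [E5 E6]]]]]. apply Hsub.
  assert (V1 : vact (hinv (mh p')) (mx p') = vact (hinv (mh p)) (mx p))
    by (rewrite E2; apply vact_inv_transport, E5).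
  assert (V2 : forall B, In B L -> vact (mh p') B = vact (mh p) B)
    by (intros B HB; apply vact_transport, E6, HB).
  split; [|split; [|split]].
  - rewrite !ma_inv, E1, E2, (E3 _ (or_introl eq_refl)); auto.
  - rewrite !mx_inv, V1; auto.
  - intros B HB. rewrite !mf_inv, !vsact_val, !vact_hinv2, V2 by auto.
    rewrite E3; auto. right; apply in_map; auto.
  - rewrite mg_inv; auto.
Qed.

Lemma M_topological_group : is_topological_group (@Mmul X tX G) (@Minv X tX G) (@M_top X tX G).
Proof. split; [apply M_is_topology|split; [apply Mmul_cont|apply Minv_cont]]. Qed.

End MTopologicalGroup.

Section MSeparation.
Variables (X : Type) (tX : topology X) (G : hsubgroup tX).

Lemma HX_separated {p q : Mt G} : fst p <> fst q -> exists L : list (V tX),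
  forall z, Mnbhd p L (fun _ => True) z -> Mnbhd q L (fun _ => True) z -> False.
Proof.
  intros Hne.
  destruct (classic (exists B, proj1_sig (mf p) B <> proj1_sig (mf q) B)) as [[B HB]|HB].
  - exists (B :: nil); intros z [_ [_ [H1 _]]] [_ [_ [H2 _]]].
    apply HB; rewrite <- H1, <- H2; auto; left; auto.
  - exists nil; intros z [Ha [Hx _]] [Ha' [Hx' _]]. apply Hne.
    assert (Ef : mf p = mf q) by (apply Vs_eq; intro B; apply NNPP; eauto).
    destruct p as [[[a x] f] g], q as [[[a' x'] f'] g']; unfold ma, mx, mf in *; simpl in *.
    congruence.
Qed.

Lemma M_hausdorff : stone_space (open tX) -> hausdorff (@M_top X tX G).
Proof.
  intros Hst p q Hne.
  destruct (classic (fst p = fst q)) as [Eh|Eh].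
  - assert (Eg : mg p <> mg q).
    { intro Eg; apply Hne. destruct p, q; unfold mg in Eg; simpl in *; congruence. }
    destruct (G_hausdorff Hst Eg) as [N1 [N2 [HN1 [HN2 [N1p [N2q Hd]]]]]].
    exists (Mnbhd p nil N1), (Mnbhd q nil N2).
    split; [apply Mnbhd_open; auto|split; [apply Mnbhd_open; auto|]].
    split; [apply Mnbhd_self; auto|split; [apply Mnbhd_self; auto|]].
    intros z [_ [_ [_ H1]]] [_ [_ [_ H2]]]; eauto.
  - destruct (HX_separated Eh) as [L HL].
    exists (Mnbhd p L (fun _ => True)), (Mnbhd q L (fun _ => True)).
    pose proof (open_full (@G_is_topology X tX G)) as HT.
    split; [apply Mnbhd_open; auto|split; [apply Mnbhd_open; auto|]].
    split; [apply Mnbhd_self; auto|split; [apply Mnbhd_self; auto|exact HL]].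
Qed.

Lemma vact_inv_stab (B : V tX) (g : Gt G) : stab B g -> vact (hinv (proj1_sig g)) B = B.
Proof. intro H; apply V_eq; intro x; rewrite vact_val; simpl; apply H. Qed.

Lemma vact_stab (B : V tX) (g : Gt G) : stab B g -> vact (proj1_sig g) B = B.
Proof. apply vact_transport. Qed.

Lemma Mnbhd_one_subgroup (L : list (V tX)) (N : set (Gt G)) :
  is_subgroup (@Gmul X tX G) (@Ginv X tX G) (@Gone X tX G) N ->
  is_subgroup (@Mmul X tX G) (@Minv X tX G) (@Mone X tX G)
    (Mnbhd (Mone G) L (fun g => N g /\ forall B, In B L -> stab B g)).
Proof.
  intros [N1 [Nm Ni]]. split; [|split].
  - apply Mnbhd_self. split; auto. intros B _ x; reflexivity.
  - intros u v [U1 [U2 [U3 [U4 U5]]]] [V1 [V2 [V3 [V4 V5]]]].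
    rewrite ma_one, mx_one, mf_one in *.
    split; [|split; [|split]].
    + rewrite ma_mul, U1, V1, V2, vact_zero, vs_zero; auto.
    + rewrite mx_mul, U2, V2, vact_zero, vadd_0l; auto.
    + intros B HB. rewrite mf_mul, vsadd_val, vsact_val.
      unfold mh; rewrite vact_inv_stab, U3, V3 by auto; auto.
    + rewrite mg_mul. split; [apply Nm; auto|].
      intros B HB x; simpl. rewrite (U5 B HB), (V5 B HB); auto.
  - intros u [U1 [U2 [U3 [U4 U5]]]].
    rewrite ma_one, mx_one, mf_one in *.
    split; [|split; [|split]].
    + rewrite ma_inv, U1, U2, vs_zero; auto.
    + rewrite mx_inv, U2, vact_zero; auto.
    + intros B HB. rewrite mf_inv, vsact_val, vact_hinv2.
      unfold mh; rewrite vact_stab by auto; auto.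
    + rewrite mg_inv. split; [apply Ni; auto|].
      intros B HB x; simpl. rewrite <- (U5 B HB (hg (proj1_sig (mg u)) x)), hfg; auto.
Qed.

Lemma M_non_archimedean : stone_space (open tX) ->
  non_archimedean (@Gmul X tX G) (@Ginv X tX G) (@Gone X tX G) (@G_top X tX G) ->
  non_archimedean (@Mmul X tX G) (@Minv X tX G) (@Mone X tX G) (@M_top X tX G).
Proof.
  intros Hst HGna U HU Ue.
  destruct (M_open_nbhd HU Ue) as [L [N [HN [Nr Hsub]]]].
  destruct (HGna N HN Nr) as [W [HW [HWsub WN]]].
  exists (Mnbhd (Mone G) L (fun g => W g /\ forall B, In B L -> stab B g)).
  split; [|split; [apply Mnbhd_one_subgroup; auto|]].
  - apply Mnbhd_open, open_inter; [apply G_is_topology|auto|].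
    apply (G_transport_list_open G Hst L (fun B => B)).
  - intros u [U1 [U2 [U3 [U4 _]]]]. apply Hsub. repeat split; auto.
Qed.

End MSeparation.

(** * Minimality *)

Section Minimality.
Variables (X : Type) (tX : topology X) (G : hsubgroup tX).
Hypothesis Hst : stone_space (open tX).
Hypothesis HGt : is_topological_group (@Gmul X tX G) (@Ginv X tX G) (@G_top X tX G).
Variable S : set (set (Mt G)).
Hypothesis S_tg : is_topological_group (@Mmul X tX G) (@Minv X tX G) S.
Hypothesis S_coarser : forall U, S U -> M_top U.
Hypothesis S_hausdorff : hausdorff S.

Lemma S_is_topology : is_topology S.
Proof. exact (tg_is_topology S_tg). Qed.

Definition near_one (P : set (Mt G)) : Prop :=
  exists W, S W /\ W (Mone G) /\ forall u, W u -> P u.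

Lemma near_one_and (P Q : set (Mt G)) :
  near_one P -> near_one Q -> near_one (fun u => P u /\ Q u).
Proof.
  intros [W1 [S1 [E1 H1]]] [W2 [S2 [E2 H2]]].
  exists (fun u => W1 u /\ W2 u); split; [apply open_inter; auto; apply S_is_topology|].
  split; [split; auto|]. intros u [? ?]; auto.
Qed.

Lemma near_one_list (Idx : Type) (P : Idx -> set (Mt G)) (l : list Idx) :
  (forall i, In i l -> near_one (P i)) -> near_one (fun u => forall i, In i l -> P i u).
Proof.
  intros H.
  destruct (@nbhd_list_inter _ S S_is_topology (Mone G) _
              (fun i A => forall u, A u -> P i u) l) as [W [SW [W1 HW]]]; auto.
  exists W; split; [auto|split; [auto|]]. intros u Wu i Hi; apply (HW i Hi), Wu.
Qed.

Lemma near_one_conj (v : Mt G) (P : set (Mt G)) :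
  near_one P -> near_one (fun u => P (Mmul (Minv v) (Mconj v u))).
Proof.
  intros [W [SW [W1 HW]]].
  destruct (conj_cont_at S_tg (fun q => W (Mmul (Minv v) q)) v (Mone G)) as [A [SA [A1 HA]]].
  - apply (open_ltranslate S_tg), SW.
  - unfold Mconj. rewrite Minv_one, Mmul_1l, Mmul_1r, Mmul_Vl; auto.
  - exists A; split; [auto|split; [auto|]]. intros u Au; apply HW, HA, Au.
Qed.

(* Tube lemma: the compactness of V* makes a family of neighbourhoods indexed by V*,
   each locally uniform, uniform. *)
Lemma near_one_uniform (P : Vs tX -> set (Mt G)) :
  (forall h, exists L, near_one (fun u => forall h', agree h' h L -> P h' u)) ->
  near_one (fun u => forall h, P h u).
Proof.
  intros H. destruct (Vs_finite_subcover _ H) as [l [Hl1 Hl2]].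
  destruct (near_one_list _ l Hl1) as [W [SW [W1 HW]]].
  exists W; split; [auto|split; [auto|]]. intros u Wu h.
  destruct (Hl2 h) as [p [Hp Ap]]. apply (HW u Wu p Hp), Ap.
Qed.

Lemma near_one_not_odd : near_one (fun u => forall h, u <> odd_pt h).
Proof.
  apply near_one_uniform with (P := fun h u => u <> odd_pt h). intro h.
  assert (Hne : Mone G <> odd_pt h) by (intro E; apply (f_equal (@ma _ _ _)) in E; discriminate).
  destruct (S_hausdorff Hne) as [A [B [SA [SB [A1 [Bh Hd]]]]]].
  destruct (M_open_nbhd (S_coarser SB) Bh) as [L [N [HN [Nh HB]]]].
  exists L, A; split; [auto|split; [auto|]].
  intros u Au h' Ha ->. apply (Hd (odd_pt h')); auto. apply HB.
  split; [auto|split; [auto|split; [|auto]]]. intros B0 HB0; apply Ha, HB0.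
Qed.

Lemma near_one_commutator (W : set (Mt G)) : S W -> W (Mone G) ->
  near_one (fun u => forall h, W (Mcomm u (Vs_pt h))).
Proof.
  intros SW W1. apply near_one_uniform with (P := fun h u => W (Mcomm u (Vs_pt h))). intro h.
  destruct (commutator_cont_at S_tg W (Mone G) (Vs_pt h) SW) as [A [B [SA [SB [A1 [Bh HAB]]]]]].
  { unfold Mcomm. rewrite Minv_one, !Mmul_1l, Mmul_Vr; auto. }
  destruct (M_open_nbhd (S_coarser SB) Bh) as [L [N [HN [Nh HB]]]].
  exists L, A; split; [auto|split; [auto|]].
  intros u Au h' Ha. apply HAB; auto. apply HB.
  split; [auto|split; [auto|split; [|auto]]]. intros B0 HB0; apply Ha, HB0.
Qed.

(* If the V coordinate of u is nonzero, some point evaluation sees it, and the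
   commutator of u with that evaluation is an odd element. *)
Lemma near_one_mx_zero : near_one (fun u => mx u = vzero tX).
Proof.
  destruct near_one_not_odd as [W0 [SW0 [W01 HW0]]].
  destruct (near_one_commutator SW0 W01) as [W [SW [W1 HW]]].
  exists W; split; [auto|split; [auto|]].
  intros u Wu. apply NNPP; intro Hne.
  assert (Hx : exists x0, proj1_sig (vact (hinv (mh u)) (mx u)) x0 = true).
  { apply NNPP; intro H. apply Hne, V_eq; intro x. rewrite vzero_val.
    apply not_true_is_false; intro E. apply H. exists (hg (mh u) x).
    rewrite vact_val; simpl; rewrite hfg; auto. }
  destruct Hx as [x0 Hx0].
  apply (HW0 _ (HW u Wu (eval_at x0)) _ (Mcomm_Vs_pt u (eval_at x0) Hx0)).
Qed.

Lemma near_one_stab (C : V tX) : near_one (fun u => stab C (mg u)).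
Proof.
  destruct (near_one_conj (V_pt C) near_one_mx_zero) as [W [SW [W1 HW]]].
  exists W; split; [auto|split; [auto|]].
  intros u Wu x. pose proof (Mconj_V_pt_mx C u (hf (mh u) x)) as E.
  rewrite (HW u Wu), vzero_val, hgf in E.
  change (proj1_sig C (hf (mh u) x) = proj1_sig C x).
  destruct (proj1_sig C (hf (mh u) x)), (proj1_sig C x); simpl in E; auto; discriminate.
Qed.

Lemma near_one_mg (N : set (Gt G)) : G_top N -> N (Gone G) -> near_one (fun u => N (mg u)).
Proof.
  intros HN N1. destruct (G_nbhd_stab Hst HN N1) as [Cs HCs].
  destruct (near_one_list (fun C u => stab C (mg u)) Cs (fun C _ => near_one_stab C))
    as [W [SW [W1 HW]]].
  exists W; split; [auto|split; [auto|]]. intros u Wu; apply HCs, HW, Wu.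
Qed.

(* If u = (1, 0, f, g) then u (0, 0, 0, g^-1) = (1, 0, f, 1) is odd; the second factor
   is close to 1 when u is. *)
Lemma near_one_ma_false : near_one (fun u => ma u = false).
Proof.
  destruct near_one_not_odd as [W0 [SW0 [W01 HW0]]].
  destruct (mul_cont_at S_tg W0 (Mone G) (Mone G) SW0) as [A1 [A2 [SA1 [SA2 [A11 [A21 H12]]]]]].
  { rewrite Mmul_1l; auto. }
  destruct (M_open_nbhd (S_coarser SA2) A21) as [L [N [HN [N1 HA2]]]].
  assert (HNi : G_top (fun g => N (Ginv g))) by (apply HGt, HN).
  assert (N1' : N (Ginv (Gone G))) by (rewrite Ginv_one; exact N1).
  destruct (near_one_and near_one_mx_zero (near_one_mg HNi N1'))
    as [W [SW [W1 HW]]].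
  exists (fun u => A1 u /\ W u); split; [apply open_inter; auto; apply S_is_topology|].
  split; [split; auto|].
  intros u [A1u Wu]. apply not_true_is_false; intro Ha. destruct (HW u Wu) as [Hx Hn].
  assert (Hv : A2 (G_pt (Ginv (mg u)))).
  { apply HA2. split; [reflexivity|split; [reflexivity|split; [intros; reflexivity|exact Hn]]]. }
  apply (HW0 _ (H12 u _ A1u Hv) _ (Mmul_G_pt_inv u Ha Hx)).
Qed.

Lemma near_one_mf_zero (B : V tX) : near_one (fun u => proj1_sig (mf u) B = false).
Proof.
  destruct (near_one_and (near_one_conj (V_pt B) near_one_ma_false) (near_one_stab B))
    as [W [SW [W1 HW]]].
  exists W; split; [auto|split; [auto|]].
  intros u Wu. destruct (HW u Wu) as [Ha Hs].
  rewrite <- (Mconj_V_pt_ma (B := B) u); [exact Ha|apply vact_stab, Hs].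
Qed.

Lemma near_one_Mnbhd (L : list (V tX)) (N : set (Gt G)) : G_top N -> N (Gone G) ->
  near_one (Mnbhd (Mone G) L N).
Proof.
  intros HN N1.
  destruct (near_one_and near_one_ma_false (near_one_and near_one_mx_zero
     (near_one_and (near_one_mg HN N1)
        (near_one_list _ L (fun B _ => near_one_mf_zero B))))) as [W [SW [W1 HW]]].
  exists W; split; [auto|split; [auto|]].
  intros u Wu. destruct (HW u Wu) as [Ha [Hx [Hn Hf]]].
  repeat split; auto.
Qed.

Lemma coarser_open_is_finer U : M_top U -> S U.
Proof.
  intros HU. apply open_of_nbhds; [apply S_is_topology|]. intros p Up.
  assert (HU' : M_top (fun q => U (Mmul p q)))
    by (apply (open_ltranslate (M_topological_group Hst HGt)), HU).
  destruct (M_open_nbhd HU' (p := Mone G)) as [L [N [HN [N1 Hs]]]].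
  { rewrite Mmul_1r; auto. }
  destruct (near_one_Mnbhd L HN N1) as [W [SW [W1 HW]]].
  exists (fun y => W (Mmul (Minv p) y)). split; [apply (open_ltranslate S_tg), SW|].
  split; [rewrite Mmul_Vl; auto|].
  intros y Wy. apply HW, Hs in Wy. rewrite Mmul_cancel in Wy; auto.
Qed.

End Minimality.

Theorem theorem4p4 (X : Type) (tX : topology X) (G : hsubgroup tX) :
  stone_space (open tX) ->
  is_topological_group (@Gmul X tX G) (@Ginv X tX G) (@G_top X tX G) ->
  non_archimedean (@Gmul X tX G) (@Ginv X tX G) (@Gone X tX G) (@G_top X tX G) ->
  non_archimedean (@Mmul X tX G) (@Minv X tX G) (@Mone X tX G) (@M_top X tX G) /\
  minimal_group (@Mmul X tX G) (@Minv X tX G) (@M_top X tX G).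
Proof.
  intros Hst HGt HGna. split; [exact (M_non_archimedean Hst HGna)|].
  split; [exact (M_topological_group Hst HGt)|split; [exact (M_hausdorff Hst)|]].
  intros O' _ Hsub Htg Hh U HU.
  exact (coarser_open_is_finer Hst HGt Htg Hsub Hh HU).
Qed.
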